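(* Let $\Sigma$ be a pure unimodular fan of dimension two. Then $\Sigma$ is Ehrhart if and only if there exist integers $a_\rho\in\mathbb{Z}$, $\rho\in\Sigma(1)$, such that \[ \sum_{\sigma\in\Sigma(2),\ \rho\subseteq\sigma}u_{\sigma(1)\setminus\rho}=a_\rho u_\rho\quad\text{for all }\rho\in\Sigma(1), \qquad\text{and}\qquad \sum_{\rho\in\Sigma(1)}(2-a_\rho)u_\rho=0. \] Moreover, if $\Sigma$ is Ehrhart, then for every $f\in\mathrm{PL}(\Sigma)$, \[ \chi_\Sigma([f])=1+\sum_{\rho\in\Sigma(1)}\Big(1-\frac{a_\rho}{2}\Big)f(u_\rho)+\sum_{\substack{\sigma\in\Sigma(2)\\ \sigma(1)=\{\rho_1,\rho_2\}}}f(u_{\rho_1})f(u_{\rho_2})-\sum_{\rho\in\Sigma(1)}\frac{a_\rho}{2}f(u_\rho)^2. \]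
   Context: $N$ is a free abelian group, $N_\mathbb{R}=N\otimes\mathbb{R}$, $M=\mathrm{Hom}(N,\mathbb{Z})$ viewed as integral linear functions. A fan is pure if all inclusion-maximal cones have the same dimension; unimodular if it contains the origin and for each cone the primitive ray generators $u_\rho\in N$ extend to a $\mathbb{Z}$-basis of $N$. $u_{\sigma(1)\setminus\rho}$ denotes the primitive generator of the ray of $\sigma$ other than $\rho$. $\mathrm{PL}(\Sigma)$: functions on $|\Sigma|$ agreeing on each cone with some element of $M$; $\underline{\mathrm{PL}}(\Sigma)$ its quotient by restrictions of elements of $M$. Courant function $\delta_\rho$: $1$ at $u_\rho$, $0$ at other ray generators. Star fan $\Sigma^\sigma$: image in $N_\mathbb{R}/\mathrm{span}(\sigma)$ (lattice $N/\mathrm{Span}_\mathbb{Z}(\sigma\cap N)$) of all cones that are faces of cones containing $\sigma$; $[f]^\sigma$ is the class of the function induced by $f-m$, $m\in M$ agreeing with $f$ on $\sigma$. A unimodular fan $\Sigma$ is Ehrhart (recursively on dimension) if (1) $\Sigma^\rho$ is Ehrhart for every ray $\rho$, and (2) there is $\chi_\Sigma:\underline{\mathrm{PL}}(\Sigma)\to\mathbb{Z}$ with $\chi_\Sigma(0)=1$ and $\chi_\Sigma([f])=\chi_\Sigma([f-\delta_\rho])+\chi_{\Sigma^\rho}([f]^\rho)$ for all $f\in\mathrm{PL}(\Sigma)$, $\rho\in\Sigma(1)$. Zero-dimensional fans are Ehrhart with $\chi=1$; such $\chi_\Sigma$ is unique (the Ehrhart polynomial). *)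

(* N = Z^d is modelled as 'rV[int]_d, N_R = R^d as 'rV[R]_d
   with R the real numbers (Stdlib R, a realType via Rstruct), and
   M = Hom(N,Z) as integer row vectors acting by the dot product. *)
From HB Require Import structures.
From mathcomp Require Import all_boot all_order all_algebra.
From mathcomp Require Import finmap.
From mathcomp Require Import Rstruct.
Set Implicit Arguments. Unset Strict Implicit. Unset Printing Implicit Defensive.
Import Order.TTheory GRing.Theory Num.Theory.
Local Open Scope ring_scope.
Local Open Scope fset_scope.

Notation RR := Rdefinitions.R.

Section Fans.
Variable d : nat.

Notation vecN := 'rV[int]_d.
(* a (simplicial) cone is given by its set of ray generators,
   a fan by its set of cones *)
Notation cone := {fset vecN}.
Notation fan := {fset {fset vecN}}.

Definition embed (u : vecN) : 'rV[RR]_d := map_mx intr u.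

Definition mdot (m u : vecN) : int := \sum_(i < d) m 0 i * u 0 i.
Definition pair (m : vecN) (x : 'rV[RR]_d) : RR :=
  \sum_(i < d) (m 0 i)%:~R * x 0 i.

Definition in_cone (S : cone) (x : 'rV[RR]_d) : Prop :=
  exists c : vecN -> RR, (forall u, u \in S -> 0 <= c u) /\
    x = \sum_(u <- S) c u *: embed u.

Definition extends_to_basis (S : cone) : Prop :=
  exists B : 'M[int]_d, B \in unitmx /\ forall u, u \in S -> exists i, row i B = u.

(* unimodular fan: contains the origin, closed under faces (faces of a
   simplicial cone = subsets of its generators), two cones meet in a common
   face, and the generators of every cone extend to a Z-basis *)
Definition unimodular_fan (F : fan) : Prop :=
  [/\ fset0 \in F,
      forall S T : cone, S \in F -> T `<=` S -> T \in F,
      forall S T : cone, S \in F -> T \in F ->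
        forall x, (in_cone S x /\ in_cone T x) <-> in_cone (S `&` T) x
    & forall S : cone, S \in F -> extends_to_basis S].

Definition pure_dim2 (F : fan) : Prop :=
  forall S : cone, S \in F -> (forall T : cone, T \in F -> S `<=` T -> T = S) ->
    #|` S| = 2%N.

Definition rays (F : fan) : {fset vecN} :=
  [fset u in \bigcup_(S <- F) S | [fset u] \in F].

(* The star fan F^sigma (sigma in F) is represented by the
   pair (F, sigma): its cones are the images of the cones tau of F containing
   sigma, its lattice is N / Span(sigma), its dual lattice is
   {m in M | m vanishes on sigma}, and a function on its support is
   represented by a function g on N_R, only its values on the cones
   tau ⊇ sigma mattering.  (F^sigma)^rho = F^(sigma ∪ rho). ---- *)

Definition vanishes_on (m : vecN) (sigma : cone) : Prop :=
  forall v, v \in sigma -> mdot m v = 0.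

Definition in_star (F : fan) (sigma : cone) (x : 'rV[RR]_d) : Prop :=
  exists tau : cone, [/\ tau \in F, sigma `<=` tau & in_cone tau x].

Definition PLrel (F : fan) (sigma : cone) (g : 'rV[RR]_d -> RR) : Prop :=
  forall tau : cone, tau \in F -> sigma `<=` tau ->
    exists m : vecN, vanishes_on m sigma /\
      forall x, in_cone tau x -> g x = pair m x.

Definition PLeq (F : fan) (sigma : cone) (g g' : 'rV[RR]_d -> RR) : Prop :=
  exists m : vecN, vanishes_on m sigma /\
    forall x, in_star F sigma x -> g x - g' x = pair m x.

(* u generates a ray of F^sigma (namely the image of the ray of u) *)
Definition star_ray (F : fan) (sigma : cone) (u : vecN) : Prop :=
  u \notin sigma /\ (u |` sigma) \in F.

Definition courant (F : fan) (sigma : cone) (u : vecN)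
    (delta : 'rV[RR]_d -> RR) : Prop :=
  [/\ PLrel F sigma delta, delta (embed u) = 1 &
      forall v, star_ray F sigma v -> v <> u -> delta (embed v) = 0].

Definition zerofun : 'rV[RR]_d -> RR := fun _ => 0.

(* EP n sigma chi : chi is an Ehrhart function of F^sigma, i.e. F^sigma is
   Ehrhart (in the recursive sense) with chi_{F^sigma} = chi; chi is a map
   on representatives that is well defined on classes.  n is a fuel bound
   on the dimension of F^sigma (dimension 0 at fuel 0). *)
Fixpoint EP (F : fan) (n : nat) (sigma : cone)
    (chi : ('rV[RR]_d -> RR) -> int) : Prop :=
  let wd := (forall g g', PLrel F sigma g -> PLrel F sigma g' ->
               PLeq F sigma g g' -> chi g = chi g') /\ chi zerofun = 1 in
  match n with
  | 0%N => wd /\ (forall u, ~ star_ray F sigma u)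
  | n'.+1 => [/\ wd,
      forall u, star_ray F sigma u -> exists chi', EP F n' (u |` sigma) chi'
      &
      forall u chi', star_ray F sigma u -> EP F n' (u |` sigma) chi' ->
        forall f delta, PLrel F sigma f -> courant F sigma u delta ->
        forall m : vecN, vanishes_on m sigma ->
          (forall x, in_cone (u |` sigma) x -> f x = pair m x) ->
          (chi f = chi (fun x => f x - delta x) + chi' (fun x => f x - pair m x))%R]
  end.

(* chi is the Ehrhart polynomial chi_F of F (cones have at most d rays,
   so fuel d suffices) *)
Definition ehrhart_poly (F : fan) (chi : ('rV[RR]_d -> RR) -> int) : Prop :=
  EP F d fset0 chi.

Definition ehrhart (F : fan) : Prop := exists chi, ehrhart_poly F chi.

Definition PL (F : fan) (f : 'rV[RR]_d -> RR) : Prop := PLrel F fset0 f.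

End Fans.

(* Subtracting integer multiples of Courant functions reduces every piecewise
   linear function to one vanishing on all rays, i.e. to the class of zero, so
   the recursion determines an Ehrhart function from those of the stars.  The
   star of a ray u is a one-dimensional fan whose rays are the images of the
   neighbours w of u, and the recursion forces chi(f) = 1 + sum_w f(u_w); this
   respects classes exactly when sum_w u_w is a multiple a_u u.  For Sigma
   itself the recursion then forces the quadratic expression of the theorem.
   Its values at a linear function m and at -m differ by
   m(sum_rho (2 - a_rho) u_rho), which must vanish as both values are 1;
   conversely, when this vector is 0 the expression is invariant under adding
   linear functions, hence defines an Ehrhart function. *)

From HB Require Import structures.
From mathcomp Require Import all_boot all_order all_algebra.
From mathcomp Require Import finmap.
From mathcomp Require Import Rstruct.
From mathcomp Require Import ring lra.
From Stdlib Require Import ClassicalEpsilon FunctionalExtensionality.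
Set Implicit Arguments. Unset Strict Implicit. Unset Printing Implicit Defensive.
Import Order.TTheory GRing.Theory Num.Theory.
Local Open Scope fset_scope.
Local Open Scope ring_scope.

Section TwoElementSets.
Variable T : choiceType.
Implicit Types (S : {fset T}) (p q u : T).

Lemma fset_card2_mem S u : #|` S| = 2%N -> u \in S ->
  exists2 p, p != u & S = p |` [fset u].
Proof.
move=> cS uS.
have : (0 < #|` S `\ u|)%N by move: cS; rewrite (cardfsD1 u) uS; case: (#|` S `\ u|).
rewrite cardfs_gt0 => /fset0Pn [p]; rewrite in_fsetD1 => /andP[pu pS].
exists p => //; apply/eqP; rewrite eq_sym eqEfcard cS cardfsU1 in_fset1 pu cardfs1 andbT.
by apply/fsubsetP => y; rewrite in_fset1U in_fset1 => /orP[] /eqP ->.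
Qed.

Lemma fset_card2 S : #|` S| = 2%N -> exists p q, p != q /\ S = p |` [fset q].
Proof.
move=> cS; have : (0 < #|` S|)%N by rewrite cS.
rewrite cardfs_gt0 => /fset0Pn [q qS].
by have [p pq ES] := fset_card2_mem cS qS; exists p, q.
Qed.

Lemma sum_fset2 (R : nmodType) p q (G : T -> R) : p != q ->
  \sum_(w <- p |` [fset q]) G w = G p + G q.
Proof. by move=> pq; rewrite big_fsetU1 ?in_fset1 // big_seq_fset1. Qed.

Lemma prod_fset2 (R : comPzSemiRingType) p q (G : T -> R) : p != q ->
  \prod_(w <- p |` [fset q]) G w = G p * G q.
Proof. by move=> pq; rewrite big_fsetU1 ?in_fset1 // big_seq_fset1. Qed.

Lemma sum_fset2_neqr (R : nmodType) p q (G : T -> R) : p != q ->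
  \sum_(w <- p |` [fset q] | w != q) G w = G p.
Proof.
move=> pq; rewrite big_mkcond big_fsetU1 ?in_fset1 // big_seq_fset1 /=.
by rewrite pq eqxx addr0.
Qed.

Lemma sum_fset2_neql (R : nmodType) p q (G : T -> R) : p != q ->
  \sum_(w <- p |` [fset q] | w != p) G w = G q.
Proof.
move=> pq; rewrite big_mkcond big_fsetU1 ?in_fset1 // big_seq_fset1 /=.
by rewrite eqxx eq_sym pq add0r.
Qed.

Lemma sum_indicator (R : pzSemiRingType) (s : seq T) u (G : T -> R) :
  uniq s -> u \in s -> \sum_(w <- s) G w * (w == u)%:R = G u.
Proof.
move=> us uin; rewrite (bigD1_seq u) //= eqxx mulr1 big1 ?addr0 //.
by move=> w /negbTE ->; rewrite mulr0.
Qed.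

End TwoElementSets.

Section Pairing.
Variable d : nat.
Implicit Types (m u : 'rV[int]_d) (x y : 'rV[RR]_d).

Lemma pair_embed m u : pair m (embed u) = (mdot m u)%:~R.
Proof.
rewrite /pair /mdot rmorph_sum; apply: eq_bigr => i _.
by rewrite /embed mxE rmorphM.
Qed.

Lemma pair0l x : pair 0 x = 0.
Proof. by rewrite /pair big1 // => i _; rewrite mxE mul0r. Qed.

Lemma pairDl m m' x : pair (m + m') x = pair m x + pair m' x.
Proof.
by rewrite /pair -big_split; apply: eq_bigr => i _; rewrite mxE intrD mulrDl.
Qed.

Lemma pairNl m x : pair (- m) x = - pair m x.
Proof. by rewrite /pair -sumrN; apply: eq_bigr => i _; rewrite mxE intrN mulNr. Qed.

Lemma pairZl (z : int) m x : pair (z *: m) x = z%:~R * pair m x.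
Proof.
by rewrite /pair mulr_sumr; apply: eq_bigr => i _; rewrite mxE intrM mulrA.
Qed.

Lemma pair0r m : pair m 0 = 0.
Proof. by rewrite /pair big1 // => i _; rewrite mxE mulr0. Qed.

Lemma pairDr m x y : pair m (x + y) = pair m x + pair m y.
Proof. by rewrite /pair -big_split; apply: eq_bigr => i _; rewrite mxE mulrDr. Qed.

Lemma pairZr m (c : RR) x : pair m (c *: x) = c * pair m x.
Proof. by rewrite /pair big_distrr; apply: eq_bigr => i _; rewrite mxE mulrCA. Qed.

Lemma mdot0l u : mdot 0 u = 0.
Proof. by rewrite /mdot big1 // => i _; rewrite mxE mul0r. Qed.

Lemma mdotDl m m' u : mdot (m + m') u = mdot m u + mdot m' u.
Proof. by rewrite /mdot -big_split; apply: eq_bigr => i _; rewrite mxE mulrDl. Qed.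

Lemma mdotNl m u : mdot (- m) u = - mdot m u.
Proof. by rewrite /mdot -sumrN; apply: eq_bigr => i _; rewrite mxE mulNr. Qed.

Lemma mdotZl (z : int) m u : mdot (z *: m) u = z * mdot m u.
Proof. by rewrite /mdot mulr_sumr; apply: eq_bigr => i _; rewrite mxE mulrA. Qed.

Lemma mdot0r m : mdot m 0 = 0.
Proof. by rewrite /mdot big1 // => i _; rewrite mxE mulr0. Qed.

Lemma mdotDr m u v : mdot m (u + v) = mdot m u + mdot m v.
Proof. by rewrite /mdot -big_split; apply: eq_bigr => i _; rewrite mxE mulrDr. Qed.

Lemma mdotZr m (z : int) u : mdot m (z *: u) = z * mdot m u.
Proof. by rewrite /mdot big_distrr; apply: eq_bigr => i _; rewrite mxE mulrCA. Qed.

Lemma mdot_sumr m I (r : seq I) (P : pred I) (G : I -> 'rV[int]_d) :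
  mdot m (\sum_(i <- r | P i) G i) = \sum_(i <- r | P i) mdot m (G i).
Proof. exact: (big_morph (mdot m) (mdotDr m) (mdot0r m)). Qed.

Lemma in_cone_embed (S : {fset 'rV[int]_d}) u : u \in S -> in_cone S (embed u).
Proof.
move=> uS; exists (fun v => (v == u)%:R); split; first by move=> v _; case: (v == u).
rewrite (bigD1_seq u) //= ?fset_uniq // eqxx scale1r big1 ?addr0 //.
by move=> v /negbTE ->; rewrite scale0r.
Qed.

Lemma eq_pair_in_cone (S : {fset 'rV[int]_d}) m m' x : in_cone S x ->
  {in S, forall u, mdot m u = mdot m' u} -> pair m x = pair m' x.
Proof.
move=> [c [_ ->]] eqS.
rewrite (big_morph (pair m) (pairDr m) (pair0r m)).
rewrite (big_morph (pair m') (pairDr m') (pair0r m')) big_seq [RHS]big_seq.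
by apply: eq_bigr => u uS; rewrite !pairZr !pair_embed eqS.
Qed.

Lemma mdot_col (C : 'M[int]_d) j u : mdot (col j C)^T u = (u *m C) 0 j.
Proof. by rewrite /mdot !mxE; apply: eq_bigr => i _; rewrite !mxE mulrC. Qed.

Lemma row_mulmxV (B : 'M[int]_d) i j : B \in unitmx ->
  (row i B *m invmx B) 0 j = (i == j)%:R.
Proof. by move=> unitB; rewrite -row_mul mulmxV // !mxE. Qed.

Lemma basis_dual (S : {fset 'rV[int]_d}) v : extends_to_basis S ->
  exists m, {in S, forall w, mdot m w = (w == v)%:R}.
Proof.
move=> [B [unitB rowsB]]; have [vS|vNS] := boolP (v \in S); last first.
  exists 0 => w wS; rewrite mdot0l.
  by case: eqP => // wv; move: vNS; rewrite -wv wS.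
have [j Hj] := rowsB v vS; exists (col j (invmx B))^T => w wS.
case: (eqVneq w v) => [->|wv]; first by rewrite mdot_col -Hj row_mulmxV // eqxx.
have [i Hi] := rowsB w wS; rewrite mdot_col -Hi row_mulmxV //.
by case: eqVneq => // eij; move: wv; rewrite -Hi -Hj eij eqxx.
Qed.

Lemma basis_multiple (S : {fset 'rV[int]_d}) u s : extends_to_basis S -> u \in S ->
  (forall m, mdot m u = 0 -> mdot m s = 0) -> exists a, s = a *: u.
Proof.
move=> [B [unitB rowsB]] uS s_ann; have [j Hj] := rowsB u uS.
exists ((s *m invmx B) 0 j).
have {1}-> : s = (s *m invmx B) *m B by rewrite -mulmxA mulVmx // mulmx1.
rewrite mulmx_sum_row (bigD1 j) //= Hj big1 ?addr0 // => k kj.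
have := s_ann (col k (invmx B))^T.
rewrite !mdot_col -Hj row_mulmxV // eq_sym (negbTE kj).
by move=> /(_ erefl) ->; rewrite scale0r.
Qed.

Lemma vec_eq0_mdot (t : 'rV[int]_d) : (forall m, mdot m t = 0) -> t = 0.
Proof.
move=> t_ann; apply/matrixP => i k; rewrite (ord1 i) mxE.
by have := t_ann (col k 1%:M)^T; rewrite mdot_col mulmx1.
Qed.

End Pairing.

Lemma ord_neq_ge2 n (i j : 'I_n) : i != j -> (2 <= n)%N.
Proof.
case: n i j => [[]//|[|n]] i j //.
by rewrite (ord1 i) (ord1 j) eqxx.
Qed.

Section Fan.
Variable d : nat.
Notation vecN := 'rV[int]_d.
Notation cone := {fset vecN}.
Notation fn := ('rV[RR]_d -> RR).
Variable F : {fset cone}.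
Hypothesis HU : unimodular_fan F.
Hypothesis HP : pure_dim2 F.
Implicit Types (S T sigma : cone) (m u v w : vecN) (g h : fn).

Lemma fan_face S T : S \in F -> T `<=` S -> T \in F.
Proof. by case: HU => _ + _ _; apply. Qed.

Lemma fan_basis S : S \in F -> extends_to_basis S.
Proof. by case: HU => _ _ _; apply. Qed.

Lemma fan_in_coneI S T x : S \in F -> T \in F -> in_cone S x -> in_cone T x ->
  in_cone (S `&` T) x.
Proof. by case: HU => _ _ HI _ SF TF xS xT; apply/(HI S T SF TF x). Qed.

Lemma ray_of_cone S w : S \in F -> w \in S -> w \in rays F.
Proof.
move=> SF wS; rewrite /rays !inE; apply/andP; split.
  by apply/bigfcupP; exists S; rewrite ?SF.
by apply: (fan_face SF); rewrite fsub1set.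
Qed.

Lemma fset1_ray w : w \in rays F -> [fset w] \in F.
Proof. by rewrite /rays !inE => /andP[]. Qed.

Lemma star_ray_in_fan sigma w : star_ray F sigma w -> w \in \bigcup_(T <- F) T.
Proof. by case=> _ wsF; apply/bigfcupP; exists (w |` sigma); rewrite ?wsF ?fset1U1. Qed.

Lemma exists_maximal_cone S : S \in F -> exists T, [/\ T \in F, S `<=` T &
  forall T', T' \in F -> T `<=` T' -> T' = T].
Proof.
move=> SF; pose P n := has (fun T => (S `<=` T) && (#|` T| == n)) F.
have PS : exists n, P n by exists #|` S|; apply/hasP; exists S; rewrite ?fsubset_refl ?eqxx.
have P_le n : P n -> (n <= \max_(T <- F) #|` T|)%N.
  by case/hasP => T TF /andP[_ /eqP <-]; apply: leq_bigmax_seq.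
case: (ex_maxnP PS P_le) => n /hasP[T TF /andP[ST /eqP cT]] T_max.
exists T; split => // T' T'F TT'; apply/eqP; rewrite eq_sym eqEfcard TT' cT.
by apply: T_max; apply/hasP; exists T'; rewrite // (fsubset_trans ST TT') eqxx.
Qed.

Lemma EP_wd n sigma chi : EP F n sigma chi ->
  (forall g g', PLrel F sigma g -> PLrel F sigma g' -> PLeq F sigma g g' ->
     chi g = chi g') /\ chi (@zerofun d) = 1.
Proof. by case: n => [|n] /= []. Qed.

Lemma PLrel0 sigma : PLrel F sigma (@zerofun d).
Proof. by move=> T _ _; exists 0; split=> [v _|x _]; rewrite ?mdot0l ?pair0l. Qed.

Lemma PLrel_pair sigma m : vanishes_on m sigma -> PLrel F sigma (pair m).
Proof. by move=> vm T _ _; exists m. Qed.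

Lemma PLrel_subZ sigma g h (z : int) : PLrel F sigma g -> PLrel F sigma h ->
  PLrel F sigma (fun x => g x - z%:~R * h x).
Proof.
move=> Hg Hh T TF sT; have [m [vm Hm]] := Hg T TF sT.
have [m' [vm' Hm']] := Hh T TF sT.
exists (m - z *: m'); split => [v vs|x xT].
  by rewrite mdotDl mdotNl mdotZl vm // vm' // mulr0 subr0.
by rewrite pairDl pairNl pairZl Hm // Hm'.
Qed.

Lemma PLrel_int sigma g T w : PLrel F sigma g -> T \in F -> sigma `<=` T ->
  w \in T -> exists z : int, g (embed w) = z%:~R.
Proof.
move=> Hg TF sT wT; have [m [_ Hm]] := Hg T TF sT.
by exists (mdot m w); rewrite Hm ?pair_embed //; apply: in_cone_embed.
Qed.

(* The Courant function is glued from the dual vectors of v in the cones of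
   [F]; two of them agree on the intersection of their cones. *)
Lemma courant_exists sigma v : star_ray F sigma v ->
  exists delta, courant F sigma v delta.
Proof.
move=> [vNs vsF].
pose is_dual T m := {in T, forall w, mdot m w = (w == v)%:R}.
pose dual T := epsilon (inhabits 0) (is_dual T).
have dualP T : T \in F -> is_dual T (dual T).
  by move=> TF; apply: (epsilon_spec (inhabits 0) _ (basis_dual v (fan_basis TF))).
pose covers x T := T \in F /\ in_cone T x.
pose delta x := pair (dual (epsilon (inhabits fset0) (covers x))) x.
have deltaE T x : T \in F -> in_cone T x -> delta x = pair (dual T) x.
  move=> TF xT; have [T'F xT'] :=
    epsilon_spec (inhabits fset0) _ (ex_intro (covers x) T (conj TF xT)).
  apply: (eq_pair_in_cone (fan_in_coneI T'F TF xT' xT)) => w.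
  by rewrite in_fsetI => /andP[wT' wT]; rewrite dualP ?dualP.
have delta_gen w : w |` sigma \in F -> delta (embed w) = ((w == v)%:R : int)%:~R.
  move=> wsF; rewrite (deltaE _ _ wsF (in_cone_embed (fset1U1 _ _))).
  by rewrite pair_embed dualP ?fset1U1.
exists delta; split.
- move=> T TF sT; exists (dual T); split; last by move=> x; apply: deltaE.
  move=> w ws; rewrite dualP ?(fsubsetP sT) //.
  by case: eqP => // wv; move: vNs; rewrite -wv ws.
- by rewrite delta_gen // eqxx.
- by move=> w [_ wsF] /eqP/negbTE wv; rewrite delta_gen // wv.
Qed.

Lemma PLeq0_of_star_rays sigma g : PLrel F sigma g ->
  (forall w, star_ray F sigma w -> g (embed w) = 0) -> PLeq F sigma g (@zerofun d).
Proof.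
move=> Hg g0; exists 0; split => [v _|x [T [TF sT xT]]]; first exact: mdot0l.
have [m [vm Hm]] := Hg T TF sT.
rewrite Hm // /zerofun subr0 (eq_pair_in_cone (m' := 0) xT) // => u uT.
rewrite mdot0l; have [us|uNs] := boolP (u \in sigma); first exact: vm.
have su : star_ray F sigma u.
  split => //; apply: (fan_face TF); apply/fsubsetP => y; rewrite in_fset1U.
  by case/orP => [/eqP ->|/(fsubsetP sT)].
apply/eqP; rewrite -(intr_eq0 RR) -pair_embed -Hm ?g0 //; exact: in_cone_embed.
Qed.

Lemma courant_invariant_subZ sigma (E : fn -> RR) w delta :
  courant F sigma w delta ->
  (forall g, PLrel F sigma g -> E g = E (fun x => g x - delta x)) ->
  forall (z : int) g, PLrel F sigma g -> E g = E (fun x => g x - z%:~R * delta x).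
Proof.
move=> [Hd _ _] step.
have step_nat (n : nat) g : PLrel F sigma g ->
    E g = E (fun x => g x - (n%:Z)%:~R * delta x).
  elim: n g => [|n IH] g Hg.
    by congr E; apply: functional_extensionality => x; rewrite mul0r subr0.
  rewrite IH // step; last exact: PLrel_subZ.
  congr E; apply: functional_extensionality => x.
  by rewrite -[n.+1]addn1 PoszD intrD; ring.
move=> [] n g Hg; first exact: step_nat.
set g' := (X in _ = E X).
have Hg' : PLrel F sigma g' by exact: PLrel_subZ.
rewrite (step_nat n.+1 g' Hg'); congr E; apply: functional_extensionality => x.
by rewrite /g' NegzE intrN; ring.
Qed.

(* Subtracting multiples of Courant functions makes [g] vanish on all rays of
   the star, and such a function is in the class of zero. *)
Lemma recursion_unique sigma (chi : fn -> int) (Phi : fn -> RR) :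
  (forall g g', PLrel F sigma g -> PLrel F sigma g' -> PLeq F sigma g g' ->
     chi g = chi g') ->
  (forall g g', (forall w, star_ray F sigma w -> g (embed w) = g' (embed w)) ->
     Phi g = Phi g') ->
  (forall g w delta, PLrel F sigma g -> star_ray F sigma w ->
     courant F sigma w delta ->
     (chi g)%:~R - Phi g =
       (chi (fun x => g x - delta x))%:~R - Phi (fun x => g x - delta x)) ->
  forall g, PLrel F sigma g ->
    (chi g)%:~R - Phi g = (chi (@zerofun d))%:~R - Phi (@zerofun d).
Proof.
move=> chi_wd Phi_loc step; pose E g := (chi g)%:~R - Phi g.
suff reduce (s : seq vecN) g : PLrel F sigma g ->
    (forall w, star_ray F sigma w -> w \notin s -> g (embed w) = 0) ->
    E g = E (@zerofun d).
  by move=> g Hg; apply: (reduce (\bigcup_(T <- F) T)) => // w /star_ray_in_fan ->.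
elim: s g => [|w s IH] g Hg gs.
  rewrite /E (Phi_loc g (@zerofun d)) => [|w sw]; last by rewrite gs.
  by rewrite (chi_wd g _ Hg (@PLrel0 _) (PLeq0_of_star_rays Hg _)) // => w sw; rewrite gs.
have [/andP[wNs wsF]|nsw] := boolP ((w \notin sigma) && (w |` sigma \in F)); last first.
  apply: IH => // w' sw' w's; apply: gs => //.
  rewrite in_cons negb_or w's andbT.
  by apply: contraNneq nsw => <-; case: sw' => -> ->.
have sw : star_ray F sigma w by [].
have [z gw] := PLrel_int Hg wsF (fsubsetU1 _ _) (fset1U1 _ _).
have [delta cd] := courant_exists sw; have [Hd dw d_other] := cd.
have stepw g0 : PLrel F sigma g0 -> E g0 = E (fun x => g0 x - delta x).
  by move=> Hg0; rewrite /E (step _ _ _ Hg0 sw cd).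
rewrite (courant_invariant_subZ cd stepw z Hg).
apply: IH => [|w' sw' w's]; first exact: PLrel_subZ.
have [->|w'w] := eqVneq w' w; first by rewrite gw dw mulr1 subrr.
rewrite d_other // ?mulr0 ?subr0; last exact/eqP.
by apply: gs; rewrite // in_cons negb_or w'w.
Qed.

Lemma fan_card_le2 S : S \in F -> (#|` S| <= 2)%N.
Proof.
move=> SF; have [T [TF sT T_max]] := exists_maximal_cone SF.
by rewrite -(HP TF T_max); apply: fsubset_leq_card.
Qed.

Lemma two_cone_maximal S T : S \in F -> #|` S| = 2%N -> T \in F -> S `<=` T -> T = S.
Proof.
move=> SF cS TF sT; apply/eqP; rewrite eq_sym eqEfcard sT cS.
exact: fan_card_le2.
Qed.

Lemma two_cone_no_star_ray S w : S \in F -> #|` S| = 2%N -> ~ star_ray F S w.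
Proof.
by move=> SF cS [wS /fan_card_le2]; rewrite cardfsU1 wS cS.
Qed.

Lemma EP_two_cone_const S n : S \in F -> #|` S| = 2%N -> EP F n S (fun _ => 1).
Proof.
move=> SF cS; case: n => [|n] /=; first by split=> // u; apply: two_cone_no_star_ray.
by split=> // [u /(two_cone_no_star_ray SF cS)|u chi' /(two_cone_no_star_ray SF cS)].
Qed.

Lemma EP_two_coneE S n chi g : S \in F -> #|` S| = 2%N -> EP F n S chi ->
  (forall x, in_cone S x -> g x = 0) -> chi g = 1.
Proof.
move=> SF cS /EP_wd [chi_wd <-] g0.
have Hg : PLrel F S g.
  move=> T TF sT; exists 0; split => [v _|x]; first exact: mdot0l.
  by rewrite (two_cone_maximal SF cS TF sT) pair0l; apply: g0.
apply: chi_wd Hg (@PLrel0 _) (PLeq0_of_star_rays Hg _) => w.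
by move/(two_cone_no_star_ray SF cS).
Qed.

Definition nbr_sum u : vecN :=
  \sum_(S <- F | (#|` S| == 2)%N && (u \in S)) \sum_(w <- S | w != u) w.

Definition nbr_val u g : RR :=
  \sum_(S <- F | (#|` S| == 2)%N && (u \in S)) \sum_(w <- S | w != u) g (embed w).

(* The Ehrhart function of the star of the ray [u], whose rays are the images
   of the neighbours of [u]. *)
Definition ray_star_poly u g : RR := 1 + nbr_val u g.

Lemma nbr_star_ray S u w : S \in F -> #|` S| = 2%N -> u \in S -> w \in S -> w != u ->
  star_ray F [fset u] w.
Proof.
move=> SF cS uS wS wu; have [p pu ES] := fset_card2_mem cS uS.
split; first by rewrite in_fset1.
by move: wS; rewrite ES in_fset1U in_fset1 (negbTE wu) orbF => /eqP ->; rewrite -ES.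
Qed.

Lemma star1_card u w : star_ray F [fset u] w -> #|` w |` [fset u]| = 2%N.
Proof. by case=> wu _; rewrite cardfsU1 wu cardfs1. Qed.

Lemma nbr_val_local u g g' :
  (forall w, star_ray F [fset u] w -> g (embed w) = g' (embed w)) ->
  nbr_val u g = nbr_val u g'.
Proof.
move=> gg'; rewrite /nbr_val big_seq_cond [RHS]big_seq_cond.
apply: eq_bigr => S /andP[SF /andP[/eqP cS uS]]; rewrite big_seq_cond [RHS]big_seq_cond.
by apply: eq_bigr => w /andP[wS wu]; rewrite gg' //; apply: (nbr_star_ray SF).
Qed.

Lemma nbr_val0 u : nbr_val u (@zerofun d) = 0.
Proof. by rewrite /nbr_val big1 // => S _; rewrite big1. Qed.

Lemma nbr_valD u g h : nbr_val u (fun x => g x + h x) = nbr_val u g + nbr_val u h.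
Proof. by rewrite /nbr_val -big_split; apply: eq_bigr => S _; rewrite big_split. Qed.

Lemma nbr_valB u g h : nbr_val u (fun x => g x - h x) = nbr_val u g - nbr_val u h.
Proof. by rewrite /nbr_val -sumrB; apply: eq_bigr => S _; rewrite sumrB. Qed.

Lemma nbr_val_pair u m : nbr_val u (pair m) = (mdot m (nbr_sum u))%:~R.
Proof.
rewrite /nbr_val /nbr_sum mdot_sumr rmorph_sum; apply: eq_bigr => S _.
by rewrite mdot_sumr rmorph_sum; apply: eq_bigr => w _; rewrite pair_embed.
Qed.

Lemma nbr_val_courant u v delta : star_ray F [fset u] v ->
  courant F [fset u] v delta -> nbr_val u delta = 1.
Proof.
move=> sv [_ dv d_other].
have vu : v != u by case: sv; rewrite in_fset1.
have vuF : v |` [fset u] \in F by case: sv.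
rewrite /nbr_val big_mkcond (bigD1_seq (v |` [fset u])) ?fset_uniq //= (star1_card sv).
rewrite in_fset1U fset11 orbT eqxx /= sum_fset2_neqr // dv big_seq_cond big1 ?addr0 //.
move=> S /andP[SF SNv]; case: ifP => // /andP[/eqP cS uS].
have [p pu ES] := fset_card2_mem cS uS; rewrite ES sum_fset2_neqr //.
apply: d_other; first by apply: (nbr_star_ray SF) => //; rewrite ES fset1U1.
by move=> pv; move: SNv; rewrite ES pv eqxx.
Qed.

Lemma EP_ray_starE u n chi : EP F n.+1 [fset u] chi ->
  forall g, PLrel F [fset u] g -> (chi g)%:~R = ray_star_poly u g.
Proof.
move=> [[chi_wd chi0] star_EP rec] g Hg.
have step g0 w delta : PLrel F [fset u] g0 -> star_ray F [fset u] w ->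
    courant F [fset u] w delta ->
    (chi g0)%:~R - ray_star_poly u g0 =
      (chi (fun x => g0 x - delta x))%:~R - ray_star_poly u (fun x => g0 x - delta x).
  move=> Hg0 sw cd; have [_ wuF] := sw.
  have [m [vm Hm]] := Hg0 _ wuF (fsubsetU1 _ _).
  have [chi' EP'] := star_EP w sw.
  rewrite (rec w chi' sw EP' g0 delta Hg0 cd m vm Hm) intrD.
  rewrite (EP_two_coneE wuF (star1_card sw) EP'); last by move=> x xT; rewrite Hm ?subrr.
  by rewrite /ray_star_poly nbr_valB (nbr_val_courant sw cd); ring.
have ray_star_poly_local g1 g2 :
    (forall w, star_ray F [fset u] w -> g1 (embed w) = g2 (embed w)) ->
    ray_star_poly u g1 = ray_star_poly u g2.
  by move=> g12; rewrite /ray_star_poly (nbr_val_local g12).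
have := recursion_unique chi_wd ray_star_poly_local step Hg.
by rewrite chi0 /ray_star_poly nbr_val0 addr0 subrr => /subr0_eq.
Qed.

Lemma ray_star_poly_EP u a n : [fset u] \in F -> nbr_sum u = a *: u ->
  EP F n.+1 [fset u] (fun g => Num.floor (ray_star_poly u g)).
Proof.
move=> uF nbrE; split.
- split; last by rewrite /ray_star_poly nbr_val0 addr0 floor1.
  move=> g g' _ _ [m [vm gg']]; congr Num.floor.
  have -> : ray_star_poly u g = ray_star_poly u (fun x => g' x + pair m x).
    congr (_ + _); apply: nbr_val_local => w [wu wuF]; rewrite -gg'; first by ring.
    by exists (w |` [fset u]); split; [|exact: fsubsetU1|exact/in_cone_embed/fset1U1].
  by rewrite /ray_star_poly nbr_valD nbr_val_pair nbrE mdotZr vm ?in_fset1 // mulr0 addr0.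
- move=> w sw; exists (fun _ => 1); apply: EP_two_cone_const (star1_card sw).
  by case: sw.
- move=> w chi' sw EP' g delta Hg cd m vm Hm; have [_ wuF] := sw.
  rewrite (EP_two_coneE wuF (star1_card sw) EP'); last by move=> x xT; rewrite Hm ?subrr.
  rewrite /ray_star_poly nbr_valB (nbr_val_courant sw cd).
  have -> : 1 + nbr_val u g = (1 + (nbr_val u g - 1)) + 1 by ring.
  by rewrite floorDrz ?intr_int // floor1.
Qed.

Lemma EP_ray_star_nbr_sum u n chi : [fset u] \in F -> EP F n.+1 [fset u] chi ->
  exists a, nbr_sum u = a *: u.
Proof.
move=> uF EPu; have [chi_wd chi0] := EP_wd EPu.
apply: (basis_multiple (fan_basis uF) (fset11 u)) => m mu.
have vm : vanishes_on m [fset u] by move=> v /fset1P ->.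
have := EP_ray_starE EPu (PLrel_pair vm).
rewrite (chi_wd _ _ (PLrel_pair vm) (@PLrel0 _)); last first.
  by exists m; split=> // x _; rewrite /zerofun subr0.
rewrite chi0 /ray_star_poly nbr_val_pair mulr1z => eq1.
have : ((mdot m (nbr_sum u))%:~R : RR) = 0 by lra.
by move/eqP; rewrite intr_eq0 => /eqP.
Qed.

Definition ehrhart_formula (a : vecN -> int) g : RR :=
  1 + \sum_(u <- rays F) (1 - (a u)%:~R / 2) * g (embed u)
    + \sum_(S <- F | #|` S| == 2%N) \prod_(v <- S) g (embed v)
    - \sum_(u <- rays F) ((a u)%:~R / 2) * g (embed u) ^+ 2.

Lemma ehrhart_formula_local a g g' :
  (forall w, [fset w] \in F -> g (embed w) = g' (embed w)) ->
  ehrhart_formula a g = ehrhart_formula a g'.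
Proof.
move=> gg'; have gg'_ray w : w \in rays F -> g (embed w) = g' (embed w).
  by move/fset1_ray; apply: gg'.
rewrite /ehrhart_formula; congr (_ + _ + _ - _).
- by rewrite big_seq [RHS]big_seq; apply: eq_bigr => w /gg'_ray ->.
- rewrite big_seq_cond [RHS]big_seq_cond; apply: eq_bigr => S /andP[SF _].
  rewrite big_seq [RHS]big_seq; apply: eq_bigr => w wS.
  by rewrite gg'_ray //; apply: (ray_of_cone SF).
- by rewrite big_seq [RHS]big_seq; apply: eq_bigr => w /gg'_ray ->.
Qed.

Lemma ehrhart_formula0 a : ehrhart_formula a (@zerofun d) = 1.
Proof.
rewrite /ehrhart_formula /zerofun !big1 ?addr0 ?subr0 //.
- by move=> w _; rewrite expr2 !mulr0.
- by move=> S /eqP /fset_card2 [p [q [pq ->]]]; rewrite prod_fset2 // mulr0.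
- by move=> w _; rewrite mulr0.
Qed.

Lemma star0P w : star_ray F fset0 w <-> [fset w] \in F.
Proof.
split; first by case=> _; rewrite fsetU0.
by move=> wF; split; [rewrite in_fset0 | rewrite fsetU0].
Qed.

Lemma courant_fset0E u delta : courant F fset0 u delta ->
  forall w, [fset w] \in F -> delta (embed w) = (w == u)%:R.
Proof.
move=> [_ du d_other] w wF; have [->|wu] := eqVneq w u; first by rewrite du.
by rewrite d_other //; [apply/star0P | exact/eqP].
Qed.

Lemma ehrhart_formula_courant a u delta g m : nbr_sum u = a u *: u ->
  [fset u] \in F -> courant F fset0 u delta -> g (embed u) = pair m (embed u) ->
  ehrhart_formula a g =
    ehrhart_formula a (fun x => g x - delta x) + ray_star_poly u (fun x => g x - pair m x).
Proof.
move=> nbrE uF cd gu.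
have deltaE w : [fset w] \in F -> g (embed w) - delta (embed w) = g (embed w) - (w == u)%:R.
  by move=> wF; rewrite (courant_fset0E cd wF).
have ur : u \in rays F by apply: (ray_of_cone uF); rewrite in_fset1.
have lin : \sum_(w <- rays F) (1 - (a w)%:~R / 2) * (g (embed w) - delta (embed w)) =
    \sum_(w <- rays F) (1 - (a w)%:~R / 2) * g (embed w) - (1 - (a u)%:~R / 2).
  rewrite big_seq; under eq_bigr => w wr do rewrite (deltaE w (fset1_ray wr)) mulrBr.
  by rewrite -big_seq sumrB sum_indicator ?fset_uniq.
have quad : \sum_(w <- rays F) ((a w)%:~R / 2) * (g (embed w) - delta (embed w)) ^+ 2 =
    \sum_(w <- rays F) ((a w)%:~R / 2) * g (embed w) ^+ 2
    - ((a u)%:~R / 2) * (2 * g (embed u) - 1).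
  rewrite big_seq.
  under eq_bigr => w wr.
    rewrite (deltaE w (fset1_ray wr)).
    have -> : (a w)%:~R / 2 * (g (embed w) - (w == u)%:R) ^+ 2 =
       (a w)%:~R / 2 * g (embed w) ^+ 2
       - ((a w)%:~R / 2 * (2 * g (embed w) - 1)) * (w == u)%:R.
      by case: (w == u); rewrite /= ?mulr1 ?mulr0 ?subr0; ring.
    over.
  by rewrite -big_seq sumrB sum_indicator ?fset_uniq.
have cones : \sum_(S <- F | #|` S| == 2%N) \prod_(v <- S) (g (embed v) - delta (embed v)) =
    \sum_(S <- F | #|` S| == 2%N) \prod_(v <- S) g (embed v) - nbr_val u g.
  rewrite /nbr_val big_mkcondr -sumrB big_seq_cond [RHS]big_seq_cond.
  apply: eq_bigr => S /andP[SF /eqP cS]; have [p [q [pq ES]]] := fset_card2 cS.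
  have pF : [fset p] \in F by apply/fset1_ray/(ray_of_cone SF); rewrite ES fset1U1.
  have qF : [fset q] \in F by apply/fset1_ray/(ray_of_cone SF); rewrite ES !inE eqxx orbT.
  rewrite ES !prod_fset2 // (deltaE p pF) (deltaE q qF) in_fset1U in_fset1.
  have [Epu|pu] := eqVneq p u.
    by rewrite -Epu sum_fset2_neql // (eq_sym q p) (negbTE pq) /=; ring.
  have [Equ|qu] := eqVneq q u; first by rewrite -Equ sum_fset2_neqr //=; ring.
  by rewrite /=; ring.
have star : ray_star_poly u (fun x => g x - pair m x) =
    1 + nbr_val u g - (a u)%:~R * g (embed u).
  by rewrite /ray_star_poly nbr_valB nbr_val_pair nbrE mdotZr intrM -pair_embed -gu addrA.
by rewrite /ehrhart_formula lin cones quad star; field.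
Qed.

Lemma sum_two_cones_by_ray (G : vecN -> cone -> RR) :
  \sum_(S <- F | #|` S| == 2%N) \sum_(u <- S) G u S =
  \sum_(u <- rays F) \sum_(S <- F | (#|` S| == 2)%N && (u \in S)) G u S.
Proof.
under [RHS]eq_bigr => u _ do rewrite big_mkcondr.
rewrite exchange_big big_seq_cond [RHS]big_seq_cond; apply: eq_bigr => S /andP[SF _].
transitivity (\sum_(u <- S) (if u \in S then G u S else 0)).
  by apply: eq_big_seq => u ->.
apply: big_fset_incl; last by move=> x _ /negbTE ->.
by apply/fsubsetP => x; apply: ray_of_cone.
Qed.

(* Expanding the products over the 2-cones and regrouping them by rays with
   [nbr_sum], the linear and the quadratic parts in [m] both collapse to
   multiples of [m (\sum_u (2 - a u) u)]. *)
Lemma ehrhart_formula_addr_pair a g m :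
  (forall u, u \in rays F -> nbr_sum u = a u *: u) ->
  \sum_(u <- rays F) (2 - a u) *: u = 0 ->
  ehrhart_formula a (fun x => g x + pair m x) = ehrhart_formula a g.
Proof.
move=> nbrE sumE; pose p w : RR := (mdot m w)%:~R.
have lin : \sum_(w <- rays F) (1 - (a w)%:~R / 2) * (g (embed w) + pair m (embed w)) =
    \sum_(w <- rays F) (1 - (a w)%:~R / 2) * g (embed w)
    + \sum_(w <- rays F) (1 - (a w)%:~R / 2) * p w.
  by rewrite -big_split; apply: eq_bigr => w _; rewrite pair_embed mulrDr.
have quad : \sum_(w <- rays F) ((a w)%:~R / 2) * (g (embed w) + pair m (embed w)) ^+ 2 =
    \sum_(w <- rays F) ((a w)%:~R / 2) * g (embed w) ^+ 2
    + \sum_(w <- rays F) ((a w)%:~R / 2) * (2 * g (embed w) * p w + p w ^+ 2).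
  by rewrite -big_split; apply: eq_bigr => w _ /=; rewrite pair_embed /p; ring.
have cones : \sum_(S <- F | #|` S| == 2%N) \prod_(v <- S) (g (embed v) + pair m (embed v)) =
    \sum_(S <- F | #|` S| == 2%N) \prod_(v <- S) g (embed v)
    + \sum_(u <- rays F) (g (embed u) + p u / 2) * nbr_val u (pair m).
  under [X in _ + X]eq_bigr => u _ do rewrite /nbr_val big_distrr.
  rewrite -sum_two_cones_by_ray -big_split; apply: eq_bigr => S /eqP cS /=.
  have [q [r [qr ->]]] := fset_card2 cS.
  rewrite !prod_fset2 // sum_fset2 // sum_fset2_neql // sum_fset2_neqr //.
  by rewrite !pair_embed /p; field.
have : \sum_(w <- rays F) (1 - (a w)%:~R / 2) * p w
    + \sum_(u <- rays F) (g (embed u) + p u / 2) * nbr_val u (pair m)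
    - \sum_(w <- rays F) ((a w)%:~R / 2) * (2 * g (embed w) * p w + p w ^+ 2) = 0.
  transitivity (((mdot m (\sum_(u <- rays F) (2 - a u) *: u))%:~R : RR) / 2).
    rewrite mdot_sumr rmorph_sum mulr_suml -big_split -sumrB big_seq [RHS]big_seq.
    apply: eq_bigr => w wr /=.
    by rewrite nbr_val_pair nbrE // !mdotZr !intrM intrB /p; field.
  by rewrite sumE mdot0r mul0r.
rewrite /ehrhart_formula lin cones quad.
set A := \sum_(w <- rays F) _; set B := \sum_(w <- rays F) _; lra.
Qed.

Lemma ehrhart_formula_pairN a m :
  ehrhart_formula a (pair m) - ehrhart_formula a (pair (- m)) =
    (mdot m (\sum_(u <- rays F) (2 - a u) *: u))%:~R.
Proof.
have quad : \sum_(w <- rays F) ((a w)%:~R / 2) * pair (- m) (embed w) ^+ 2 =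
    \sum_(w <- rays F) ((a w)%:~R / 2) * pair m (embed w) ^+ 2.
  by apply: eq_bigr => w _; rewrite pairNl sqrrN.
have cones : \sum_(S <- F | #|` S| == 2%N) \prod_(v <- S) pair (- m) (embed v) =
    \sum_(S <- F | #|` S| == 2%N) \prod_(v <- S) pair m (embed v).
  apply: eq_bigr => S /eqP /fset_card2 [p [q [pq ->]]].
  by rewrite !prod_fset2 // !pairNl mulrNN.
have lin : \sum_(w <- rays F) (1 - (a w)%:~R / 2) * pair (- m) (embed w) =
    - \sum_(w <- rays F) (1 - (a w)%:~R / 2) * pair m (embed w).
  by rewrite -sumrN; apply: eq_bigr => w _; rewrite pairNl mulrN.
have -> : ((mdot m (\sum_(u <- rays F) (2 - a u) *: u))%:~R : RR) =
    2 * \sum_(w <- rays F) (1 - (a w)%:~R / 2) * pair m (embed w).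
  rewrite mdot_sumr rmorph_sum mulr_sumr; apply: eq_bigr => w _.
  by rewrite mdotZr /= rmorphM rmorphB /= pair_embed; field.
rewrite /ehrhart_formula quad cones lin.
set A := \sum_(w <- rays F) _; set B := \sum_(w <- rays F) _; set C := \sum_(S <- F | _) _.
lra.
Qed.

Lemma PLrel_subr_pair g w m : PL F g ->
  (forall x, in_cone (w |` fset0) x -> g x = pair m x) ->
  PLrel F [fset w] (fun x => g x - pair m x).
Proof.
move=> Hg gm T TF sT; have [mT [_ HmT]] := Hg T TF (fsub0set _).
have wT : w \in T by rewrite -fsub1set.
exists (mT - m); split => [v|x xT]; last by rewrite pairDl pairNl HmT.
rewrite in_fset1 => /eqP ->; rewrite mdotDl mdotNl; apply/eqP; rewrite subr_eq0; apply/eqP.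
apply: (@intr_inj RR); rewrite -!pair_embed -HmT; last exact: in_cone_embed.
by rewrite gm //; apply: in_cone_embed; rewrite fset1U1.
Qed.

(* [ehrhart_poly] runs the recursion with fuel [d], which has to reach the
   2-cones. *)
Lemma fan_dim_ge2 : (2 <= d)%N.
Proof.
have F0 : fset0 \in F by case: HU.
have [T [TF _ T_max]] := exists_maximal_cone F0.
have [p [q [pq ET]]] := fset_card2 (HP TF T_max).
have [B [_ rowsB]] := fan_basis TF.
have [i Hi] := rowsB p ltac:(by rewrite ET fset1U1).
have [j Hj] := rowsB q ltac:(by rewrite ET !inE eqxx orbT).
by apply: (@ord_neq_ge2 _ i j); apply: contra pq => /eqP eij; rewrite -Hi -Hj eij.
Qed.

Lemma EP_fanE a chi n : (forall u, u \in rays F -> nbr_sum u = a u *: u) ->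
  (2 <= n)%N -> EP F n fset0 chi -> forall f, PL F f -> (chi f)%:~R = ehrhart_formula a f.
Proof.
move=> nbrE; case: n => [|[|n]] // _ [[chi_wd chi0] star_EP rec] f Hf.
have formula_local g g' : (forall w, star_ray F fset0 w -> g (embed w) = g' (embed w)) ->
    ehrhart_formula a g = ehrhart_formula a g'.
  by move=> gg'; apply: ehrhart_formula_local => w /star0P; apply: gg'.
have step g w delta : PLrel F fset0 g -> star_ray F fset0 w -> courant F fset0 w delta ->
    (chi g)%:~R - ehrhart_formula a g =
    (chi (fun x => g x - delta x))%:~R - ehrhart_formula a (fun x => g x - delta x).
  move=> Hg sw cd; have wF := (star0P w).1 sw.
  have [m [vm Hm]] := Hg _ sw.2 (fsub0set _).
  have [chi' EP'] := star_EP w sw.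
  rewrite (rec w chi' sw EP' g delta Hg cd m vm Hm) intrD; rewrite fsetU0 in EP'.
  rewrite (EP_ray_starE EP' (PLrel_subr_pair Hg Hm)).
  have gw : g (embed w) = pair m (embed w) by apply/Hm/in_cone_embed/fset1U1.
  by rewrite (ehrhart_formula_courant (nbrE w (ray_of_cone wF (fset11 w))) wF cd gw); ring.
have := recursion_unique chi_wd formula_local step Hf.
by rewrite chi0 ehrhart_formula0 subrr => /subr0_eq.
Qed.

Lemma EP_fan_conditions chi n : (2 <= n)%N -> EP F n fset0 chi ->
  exists a, (forall u, u \in rays F -> nbr_sum u = a u *: u) /\
            \sum_(u <- rays F) (2 - a u) *: u = 0.
Proof.
case: n => [|[|n]] // n_ge2 EPchi; have [[chi_wd chi0] star_EP _] := EPchi.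
have multiple u : exists z : int, (u \in rays F) ==> (nbr_sum u == z *: u).
  have [ur|] := boolP (u \in rays F); last by exists 0.
  have [chi' EP'] := star_EP u ((star0P u).2 (fset1_ray ur)); rewrite fsetU0 in EP'.
  by have [z ->] := EP_ray_star_nbr_sum (fset1_ray ur) EP'; exists z; rewrite eqxx.
pose a u := xchoose (multiple u).
have nbrE u : u \in rays F -> nbr_sum u = a u *: u.
  by move=> ur; apply/eqP; move/implyP: (xchooseP (multiple u)); apply.
exists a; split => //; apply: vec_eq0_mdot => m.
have formula_pair m' : ehrhart_formula a (pair m') = 1.
  have vm : vanishes_on m' fset0 by move=> v; rewrite in_fset0.
  rewrite -(EP_fanE nbrE n_ge2 EPchi (PLrel_pair vm)).
  rewrite (chi_wd _ _ (PLrel_pair vm) (@PLrel0 _)) ?chi0 //.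
  by exists m'; split => // x _; rewrite /zerofun subr0.
apply: (@intr_inj RR); rewrite -ehrhart_formula_pairN !formula_pair.
by rewrite subrr.
Qed.

Lemma ehrhart_formula_EP a n : (forall u, u \in rays F -> nbr_sum u = a u *: u) ->
  \sum_(u <- rays F) (2 - a u) *: u = 0 -> (2 <= n)%N ->
  EP F n fset0 (fun f => Num.floor (ehrhart_formula a f)).
Proof.
move=> nbrE sumE; case: n => [|[|n]] // _; split.
- split; last by rewrite ehrhart_formula0 floor1.
  move=> g g' _ _ [m [_ gg']]; congr Num.floor.
  rewrite -(ehrhart_formula_addr_pair g' m nbrE sumE).
  apply: ehrhart_formula_local => w wF; rewrite -gg'; first by ring.
  by exists [fset w]; split; [|exact: fsub0set|exact/in_cone_embed/fset11].
- move=> u su; have uF := (star0P u).1 su.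
  exists (fun g => Num.floor (ray_star_poly u g)); rewrite fsetU0.
  exact: (ray_star_poly_EP _ uF (nbrE u (ray_of_cone uF (fset11 u)))).
- move=> u chi' su EP' f delta Hf cd m vm Hm; rewrite fsetU0 in EP'.
  have uF := (star0P u).1 su.
  have fu : f (embed u) = pair m (embed u) by apply/Hm/in_cone_embed/fset1U1.
  rewrite (ehrhart_formula_courant (nbrE u (ray_of_cone uF (fset11 u))) uF cd fu).
  rewrite -(EP_ray_starE EP' (PLrel_subr_pair Hf Hm)).
  by rewrite floorDrz ?intr_int // intrKfloor.
Qed.

End Fan.

Theorem proposition3 (d : nat) (F : {fset {fset 'rV[int]_d}}) :
  unimodular_fan F -> pure_dim2 F ->
  let cond (a : 'rV[int]_d -> int) :=
    (forall u, u \in rays F ->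
       \sum_(S <- F | (#|` S| == 2)%N && (u \in S)) \sum_(v <- S | v != u) v
         = a u *: u)
    /\ \sum_(u <- rays F) (2 - a u) *: u = 0 in
  (ehrhart F <-> exists a, cond a) /\
  (forall a, cond a -> forall chi, ehrhart_poly F chi ->
   forall f, PL F f ->
     (chi f)%:~R =
       1 + \sum_(u <- rays F) (1 - (a u)%:~R / 2) * f (embed u)
         + \sum_(S <- F | #|` S| == 2%N) \prod_(v <- S) f (embed v)
         - \sum_(u <- rays F) ((a u)%:~R / 2) * f (embed u) ^+ 2 :> RR).
Proof.
move=> HU HP cond; have d_ge2 := fan_dim_ge2 HU HP; split; first split.
- by case=> chi /(EP_fan_conditions HU HP d_ge2).
- case=> a [nbrE sumE]; exists (fun f => Num.floor (ehrhart_formula F a f)).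
  exact: ehrhart_formula_EP.
- by move=> a [nbrE _] chi EPchi f; apply: (EP_fanE HU HP nbrE d_ge2 EPchi).
Qed.
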